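(* Let $\Gamma$ be a finite simplicial graph with vertex set $V=\{a_0,\ldots,a_{n-1}\}$, let $M$ be a positive integer and $\sigma:B(M)\to A(\Gamma)$ the map defined in the context. For all $u,v\in V$ and $x,y\in B(M)$: (1) $xy^{-1}\in Z(u)$ if and only if $\sigma(x)\sigma(y)^{-1}\in Z(u)$; (2) $xy^{-1}\in Z(v)Z(u)$ if and only if $\sigma(x)\sigma(y)^{-1}\in Z(v)Z(u)$.
   Context: $A(\Gamma)=\langle V\mid[a,b]=1\text{ for }\{a,b\}\in E(\Gamma)\rangle$; $\|w\|$ is the word length with respect to $V$, and $B(M)=\{w\in A(\Gamma):\|w\|\le M\}$. For $v\in V$, $Z(v)=\langle\mathrm{st}_\Gamma(v)\rangle$, the subgroup generated by $v$ and its neighbours, and $Z(v)Z(u)=\{gh:g\in Z(v),h\in Z(u)\}$. For a word $s_1^{e_1}\cdots s_\ell^{e_\ell}$ ($s_i\in V$, $e_i\in\{\pm1\}$, $\ell=\|w\|$) representing $w\in B(M)$, its right-counting vector $(f_1,\ldots,f_\ell)$ has $f_i=\min\|y\|$ over $y\in A(\Gamma)$ with $s_i^{e_i}\cdots s_\ell^{e_\ell}=x\,s_i^{e_i}\,y$ for some $x\in\langle\mathrm{lk}_\Gamma(s_i)\rangle$ ($\mathrm{lk}_\Gamma(s)$ = vertices adjacent to $s$). Set $N_i=\frac{3e_i-1}{2}\cdot4^{M-1-f_i}$ and $\sigma(w)=s_1^{N_1}\cdots s_\ell^{N_\ell}$; this is independent of the chosen word of length $\|w\|$ representing $w$. *)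

From mathcomp Require Import all_boot all_order all_algebra.
From mathcomp Require Import boolp.
Set Implicit Arguments. Unset Strict Implicit. Unset Printing Implicit Defensive.

(* Right-angled Artin group A(Gamma), Gamma a finite simplicial graph on the
   vertex set 'I_n given by a symmetric irreflexive relation adj.
   Elements of A(Gamma) are represented by words in V^{+-1}:
   a letter (s, true) is s, a letter (s, false) is s^{-1}. *)
Definition letter (n : nat) := ('I_n * bool)%type.
Definition word (n : nat) := seq (letter n).

Inductive weq (n : nat) (adj : rel 'I_n) : word n -> word n -> Prop :=
| weq_refl w : weq adj w w
| weq_sym w1 w2 : weq adj w1 w2 -> weq adj w2 w1
| weq_trans w1 w2 w3 : weq adj w1 w2 -> weq adj w2 w3 -> weq adj w1 w3
| weq_ctx p q w1 w2 : weq adj w1 w2 -> weq adj (p ++ w1 ++ q) (p ++ w2 ++ q)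
| weq_free (s : 'I_n) (e : bool) : weq adj [:: (s, e); (s, ~~ e)] [::]
| weq_comm (a b : 'I_n) (e f : bool) :
    adj a b -> weq adj [:: (a, e); (b, f)] [:: (b, f); (a, e)].

Definition winv (n : nat) (w : word n) : word n :=
  rev (map (fun l => (l.1, ~~ l.2)) w).

(* minimum of a (classical) set of naturals; 0 if empty *)
Lemma ex_asbool (P : nat -> Prop) :
  (exists k, P k) -> exists k, (fun k => `[< P k >]) k.
Proof. by case=> k hk; exists k; apply/asboolP. Qed.

Definition nmin (P : nat -> Prop) : nat :=
  match pselect (exists k, P k) with
  | left h => @ex_minn (fun k => `[< P k >]) (ex_asbool h)
  | right _ => 0
  end.

Definition wlen (n : nat) (adj : rel 'I_n) (w : word n) : nat :=
  nmin (fun k => exists w', weq adj w w' /\ size w' = k).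

Definition in_sub (n : nat) (adj : rel 'I_n) (S : pred 'I_n) (w : word n) : Prop :=
  exists w', weq adj w w' /\ all (fun l => S l.1) w'.

Definition star (n : nat) (adj : rel 'I_n) (v : 'I_n) : pred 'I_n :=
  fun u => (u == v) || adj v u.
Definition inZ (n : nat) (adj : rel 'I_n) (v : 'I_n) (w : word n) : Prop :=
  in_sub adj (star adj v) w.
Definition inZZ (n : nat) (adj : rel 'I_n) (v u : 'I_n) (w : word n) : Prop :=
  exists g h, inZ adj v g /\ inZ adj u h /\ weq adj w (g ++ h).

(* f_i for the letter l = s_i^{e_i}, with t = s_i^{e_i} ... s_l^{e_l} the suffix:
   min ||y|| over y with t = x s_i^{e_i} y, x in <lk(s_i)>. *)
Definition fval (n : nat) (adj : rel 'I_n) (l : letter n) (t : word n) : nat :=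
  nmin (fun m => exists x y : word n,
          weq adj t (x ++ l :: y) /\ in_sub adj (adj l.1) x /\ wlen adj y = m).

Definition sgn (e : bool) : int := if e then 1%R else (-1)%R.
Definition Nexp (M : nat) (e : bool) (f : nat) : int :=
  (divz (3 * sgn e - 1)%R 2 * (4 ^ (M - 1 - f))%:Z)%R.

Definition wpow (n : nat) (s : 'I_n) (z : int) : word n :=
  match z with
  | Posz k => nseq k (s, true)
  | Negz k => nseq k.+1 (s, false)
  end.

Fixpoint sigma (n : nat) (adj : rel 'I_n) (M : nat) (w : word n) : word n :=
  match w with
  | [::] => [::]
  | l :: r => wpow l.1 (Nexp M l.2 (fval adj l (l :: r))) ++ sigma adj M r
  end.

From mathcomp Require Import all_boot all_order all_algebra.
From mathcomp Require Import boolp.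
Set Implicit Arguments. Unset Strict Implicit. Unset Printing Implicit Defensive.

(** Words up to commuting adjacent letters at adjacent vertices ([shuffle]) are
    faithfully encoded by heaps: one stack per vertex t, recording the letters
    at t and, as blockers, the letters at vertices not adjacent to t.  Letting a
    letter cancel against an inverse on top of the heap, or else be pushed,
    defines an action of A(Gamma) on heaps; hence two reduced words are equal in
    A(Gamma) iff they are shuffles of each other.  For a reduced word, lying in
    Z(u) means that all its letters are in st(u), and lying in Z(v)Z(u) means
    that it shuffles into an st(v)-word followed by an st(u)-word.

    Geodesic words are reduced, and x y^-1 reduces to a b^-1 where x ~ a c and
    y ~ b c.  Since f_i only depends on the element represented by the suffix,
    sigma respects shuffles, so sigma(x) sigma(y)^-1 = a' b'^-1 where a', b'
    replace each letter s^e of a, b by s^N_i; only N_i <> 0 with the sign of e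
    matters.  Such expansions preserve reducedness, and they preserve both
    combinatorial conditions because they do not change which letters can be
    shuffled to the end of the word. *)

Lemma nmin_le (P : nat -> Prop) k : P k -> nmin P <= k.
Proof.
move=> Pk; rewrite /nmin; case: pselect => [exP|[]]; last by exists k.
by case: ex_minnP => m _; apply; apply/asboolP.
Qed.

Lemma wpow_Nexp n (l : letter n) M f :
  exists k, wpow l.1 (Nexp M l.2 f) = nseq k.+1 l.
Proof.
case: l => s []; rewrite /Nexp /sgn.
  have -> : divz (3 * 1 - 1)%R 2 = 1%R by [].
  rewrite GRing.mul1r; have := expn_gt0 4 (M - 1 - f).
  by case: (4 ^ _) => // k _; exists k.
have -> : (divz (3 * -1 - 1) 2 * (4 ^ (M - 1 - f))%:Z)%R =
          Negz (2 * 4 ^ (M - 1 - f)).-1.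
  by rewrite NegzE prednK ?muln_gt0 ?expn_gt0 // PoszM GRing.mulNr.
by exists (2 * 4 ^ (M - 1 - f)).-1.
Qed.

Lemma rcons_nseq T k (x : T) : rcons (nseq k x) x = nseq k.+1 x.
Proof. by elim: k => //= k ->. Qed.

Lemma wpow_all n (s : 'I_n) z (P : pred (letter n)) :
  (forall e, P (s, e)) -> all P (wpow s z).
Proof. by move=> h; case: z => k; rewrite all_nseq h orbT. Qed.

Section WordInverse.
Variable n : nat.
Implicit Types (w : word n) (l : letter n).

Lemma winv_cat w1 w2 : winv (w1 ++ w2) = winv w2 ++ winv w1.
Proof. by rewrite /winv map_cat rev_cat. Qed.

Lemma winv_cons l w : winv (l :: w) = winv w ++ [:: (l.1, ~~ l.2)].
Proof. by rewrite -cat1s winv_cat. Qed.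

Lemma winv_nseq k l : winv (nseq k l) = nseq k (l.1, ~~ l.2).
Proof. by rewrite /winv map_nseq rev_nseq. Qed.

Lemma winvK : involutive (@winv n).
Proof.
move=> w; rewrite /winv map_rev revK -map_comp map_id_in // => -[s e] _ /=.
by rewrite negbK.
Qed.

Lemma size_winv w : size (winv w) = size w.
Proof. by rewrite size_rev size_map. Qed.

Lemma all_winv (P : pred 'I_n) w :
  all (fun l => P l.1) (winv w) = all (fun l => P l.1) w.
Proof. by rewrite /winv all_rev all_map. Qed.

End WordInverse.

Section RightAngledArtinGroup.
Variables (n : nat) (adj : rel 'I_n).
Hypotheses (adj_sym : symmetric adj) (adj_irr : irreflexive adj).

Local Notation word := (word n).
Local Notation letter := (letter n).
Local Notation weq := (weq adj).

Lemma adj_neq a b : adj a b -> a != b.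
Proof. by apply: contraTneq => ->; rewrite adj_irr. Qed.

Lemma weq_catl p w1 w2 : weq w1 w2 -> weq (p ++ w1) (p ++ w2).
Proof. by move=> h; have := weq_ctx p [::] h; rewrite !cats0. Qed.

Lemma weq_catr q w1 w2 : weq w1 w2 -> weq (w1 ++ q) (w2 ++ q).
Proof. by move=> h; have := weq_ctx [::] q h. Qed.

Lemma weq_cat w1 w2 v1 v2 : weq w1 w2 -> weq v1 v2 -> weq (w1 ++ v1) (w2 ++ v2).
Proof. by move=> h1 h2; apply: weq_trans (weq_catr _ h1) (weq_catl _ h2). Qed.

Lemma weq_cancel_letter (l : letter) : weq [:: (l.1, ~~ l.2); l] [::].
Proof. by have := weq_free adj l.1 (~~ l.2); rewrite negbK; case: l. Qed.

Lemma weq_winv w1 w2 : weq w1 w2 -> weq (winv w1) (winv w2).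
Proof.
elim=> {w1 w2} [w|w1 w2 _|w1 w2 w3 _ h1 _ h2|p q w1 w2 _ h|s e|a b e f hab].
- exact: weq_refl.
- exact: weq_sym.
- exact: weq_trans h1 h2.
- by rewrite !winv_cat -!catA; apply: weq_ctx.
- by rewrite /winv /= negbK; apply: weq_free.
- by rewrite /winv /=; apply: weq_comm; rewrite adj_sym.
Qed.

Lemma weq_cat_winv w : weq (w ++ winv w) [::].
Proof.
elim: w => [|[s e] w IH]; first exact: weq_refl.
have := weq_ctx [:: (s, e)] [:: (s, ~~ e)] IH; rewrite /= -catA winv_cons => h.
exact: weq_trans h (weq_free adj s e).
Qed.

Inductive shuffle : word -> word -> Prop :=
| shuffle_refl w : shuffle w w
| shuffle_trans w1 w2 w3 : shuffle w1 w2 -> shuffle w2 w3 -> shuffle w1 w3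
| shuffle_swap p q a b :
    adj a.1 b.1 -> shuffle (p ++ a :: b :: q) (p ++ b :: a :: q).

Lemma shuffle_sym w1 w2 : shuffle w1 w2 -> shuffle w2 w1.
Proof.
elim=> [w|w1' w2' w3 _ h1 _ h2|p q a b hab]; first exact: shuffle_refl.
  exact: shuffle_trans h2 h1.
by apply: shuffle_swap; rewrite adj_sym.
Qed.

Lemma shuffle_weq w1 w2 : shuffle w1 w2 -> weq w1 w2.
Proof.
elim=> [w|w1' w2' w3 _ h1 _ h2|p q [a e] [b f] hab]; first exact: weq_refl.
  exact: weq_trans h1 h2.
by have := weq_ctx p q (weq_comm e f hab).
Qed.

Lemma shuffle_catl p w1 w2 : shuffle w1 w2 -> shuffle (p ++ w1) (p ++ w2).
Proof.
elim=> [w|w1' w2' w3 _ h1 _ h2|p' q a b hab]; first exact: shuffle_refl.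
  exact: shuffle_trans h1 h2.
by rewrite !catA; apply: shuffle_swap.
Qed.

Lemma shuffle_catr q w1 w2 : shuffle w1 w2 -> shuffle (w1 ++ q) (w2 ++ q).
Proof.
elim=> [w|w1' w2' w3 _ h1 _ h2|p q' a b hab]; first exact: shuffle_refl.
  exact: shuffle_trans h1 h2.
by rewrite -!catA; apply: shuffle_swap.
Qed.

Lemma shuffle_perm w1 w2 : shuffle w1 w2 -> perm_eq w1 w2.
Proof.
elim=> [w|w1' w2' w3 _ h1 _ h2|p q a b _]; first exact: perm_refl.
  exact: perm_trans h1 h2.
by rewrite perm_cat2l -[a :: _]/([:: a] ++ [:: b] ++ q) perm_catCA.
Qed.

Lemma shuffle_size w1 w2 : shuffle w1 w2 -> size w1 = size w2.
Proof. by move/shuffle_perm/perm_size. Qed.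

Lemma shuffle_all (P : pred letter) w1 w2 : shuffle w1 w2 -> all P w1 = all P w2.
Proof. by move/shuffle_perm/perm_all. Qed.

Lemma shuffle_rot1 l w :
  all (fun m => adj l.1 m.1) w -> shuffle (l :: w) (w ++ [:: l]).
Proof.
elim: w => [|m w IH] /=; first by move=> _; apply: shuffle_refl.
case/andP=> hm hw; apply: shuffle_trans (shuffle_swap [::] w hm) _.
exact: (shuffle_catl [:: m] (IH hw)).
Qed.

Lemma shuffle_catC w1 w2 :
  all (fun l => all (fun m => adj l.1 m.1) w2) w1 -> shuffle (w1 ++ w2) (w2 ++ w1).
Proof.
elim: w1 => [|l w1 IH] /=; first by rewrite cats0 => _; apply: shuffle_refl.
case/andP=> hl hw; apply: shuffle_trans (shuffle_catl [:: l] (IH hw)) _.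
by have := shuffle_catr w1 (shuffle_rot1 hl); rewrite -catA.
Qed.

Lemma shuffle_rcons_cat p p' q l : shuffle p (rcons p' l) ->
  all (fun m => adj l.1 m.1) q -> shuffle (p ++ q) (rcons (p' ++ q) l).
Proof.
move=> hp hq; apply: shuffle_trans (shuffle_catr q hp) _.
by rewrite cat_rcons rcons_cat -cats1; apply/shuffle_catl/shuffle_rot1.
Qed.

Lemma shuffle_winv w1 w2 : shuffle w1 w2 -> shuffle (winv w1) (winv w2).
Proof.
elim=> [w|w1' w2' w3 _ h1 _ h2|p q a b hab]; first exact: shuffle_refl.
  exact: shuffle_trans h1 h2.
rewrite !winv_cat !winv_cons -!catA.
by apply: shuffle_swap; rewrite /= adj_sym.
Qed.

(** * Heaps *)

(* At the vertex t, [Some e] records a letter t^e and [None] a letter at a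
   vertex not adjacent to t, which prevents t-letters below it from moving
   to the end of the word. *)
Definition heap := {ffun 'I_n -> seq (option bool)}.
Definition heap0 : heap := [ffun _ => [::]].
Definition htop (P : heap) (t : 'I_n) : option bool := head None (P t).
Definition hpush (l : letter) (P : heap) : heap :=
  [ffun t => if t == l.1 then Some l.2 :: P t
             else if ~~ adj l.1 t then None :: P t else P t].
Definition hpop (s : 'I_n) (P : heap) : heap :=
  [ffun t => if (t == s) || ~~ adj s t then behead (P t) else P t].
Definition hact (l : letter) (P : heap) : heap :=
  if htop P l.1 == Some (~~ l.2) then hpop l.1 P else hpush l P.
Definition hpushes (P : heap) (w : word) : heap :=
  foldl (fun Q l => hpush l Q) P w.
Definition heap_of (w : word) : heap := hpushes heap0 w.
Definition hacts (P : heap) (w : word) : heap :=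
  foldl (fun Q l => hact l Q) P w.
Definition rheap (w : word) : heap := hacts heap0 w.

Lemma hpushes_cat P w1 w2 : hpushes P (w1 ++ w2) = hpushes (hpushes P w1) w2.
Proof. exact: foldl_cat. Qed.

Lemma heap_of_rcons w l : heap_of (rcons w l) = hpush l (heap_of w).
Proof. by rewrite /heap_of -cats1 hpushes_cat. Qed.

Lemma hacts_cat P w1 w2 : hacts P (w1 ++ w2) = hacts (hacts P w1) w2.
Proof. exact: foldl_cat. Qed.

Lemma hacts_rcons P w l : hacts P (rcons w l) = hact l (hacts P w).
Proof. by rewrite -cats1 hacts_cat. Qed.

Lemma htop_push l P t : htop (hpush l P) t =
  if t == l.1 then Some l.2 else if ~~ adj l.1 t then None else htop P t.
Proof. by rewrite /htop ffunE; case: eqP => //; case: adj. Qed.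

Lemma htop_push_adj l P t : adj l.1 t -> htop (hpush l P) t = htop P t.
Proof. by move=> h; rewrite htop_push h eq_sym (negbTE (adj_neq h)). Qed.

Lemma hpop_push l P : hpop l.1 (hpush l P) = P.
Proof.
apply/ffunP=> t; rewrite !ffunE; case: (eqVneq t l.1) => [->|_] //=.
by case: adj.
Qed.

Lemma hpush_comm a b P : adj a.1 b.1 -> hpush a (hpush b P) = hpush b (hpush a P).
Proof.
move=> hab; have hba : adj b.1 a.1 by rewrite adj_sym.
apply/ffunP=> t; rewrite !ffunE.
case: (eqVneq t a.1) => [->|_]; first by rewrite (negbTE (adj_neq hab)) hba.
case: (eqVneq t b.1) => [->|_]; first by rewrite hab.
by case: (adj a.1 t); case: (adj b.1 t).
Qed.

Lemma hpop_comm s t P : hpop s (hpop t P) = hpop t (hpop s P).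
Proof. by apply/ffunP=> u; rewrite !ffunE; do !case: ifP. Qed.

Lemma heap_of_shuffle w1 w2 : shuffle w1 w2 -> heap_of w1 = heap_of w2.
Proof.
elim=> [w|w1' w2' w3 _ h1 _ h2|p q a b hab]; [by [] | by rewrite h1 h2 |].
by rewrite /heap_of !hpushes_cat /= (hpush_comm _ hab).
Qed.

Lemma heap_of_shuffle_rcons w w' l :
  shuffle w (rcons w' l) -> heap_of w = hpush l (heap_of w').
Proof. by move/heap_of_shuffle->; rewrite heap_of_rcons. Qed.

Lemma hpop_shuffle_rcons w w' l :
  shuffle w (rcons w' l) -> hpop l.1 (heap_of w) = heap_of w'.
Proof. by move/heap_of_shuffle_rcons->; rewrite hpop_push. Qed.

Lemma htop_rcons w l : htop (heap_of (rcons w l)) l.1 = Some l.2.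
Proof. by rewrite heap_of_rcons htop_push eqxx. Qed.

Lemma htop_shuffle_rcons w s e :
  htop (heap_of w) s = Some e -> exists w', shuffle w (rcons w' (s, e)).
Proof.
elim/last_ind: w => [|w l IH]; first by rewrite /htop ffunE.
rewrite heap_of_rcons htop_push; case: eqP => [-> [<-]|_].
  by exists w; case: l => ? ?; apply: shuffle_refl.
case hadj: (adj l.1 s) => //= /IH [w' hw'].
exists (rcons w' l); rewrite -!cats1.
apply: shuffle_trans (shuffle_catr _ hw') _; rewrite -cats1 -!catA.
by apply: (shuffle_swap w' [::]); rewrite /= adj_sym.
Qed.

Lemma htop_cat_shuffle_rcons p q s e : htop (heap_of (p ++ q)) s = Some e ->
  (exists q', shuffle q (rcons q' (s, e))) \/
  (exists p', shuffle p (rcons p' (s, e)) /\ all (fun l => adj s l.1) q).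
Proof.
elim/last_ind: q => [|q l IH].
  by rewrite cats0 => /htop_shuffle_rcons [p' hp]; right; exists p'.
rewrite -rcons_cat heap_of_rcons htop_push; case: eqP => [-> [<-]|_].
  by left; exists q; case: l => ? ?; apply: shuffle_refl.
case hadj: (adj l.1 s) => //= /IH [[q' hq']|[p' [hp hq]]].
  left; exists (rcons q' l); rewrite -!cats1.
  apply: shuffle_trans (shuffle_catr _ hq') _; rewrite -cats1 -!catA.
  by apply: (shuffle_swap q' [::]); rewrite /= adj_sym.
by right; exists p'; rewrite all_rcons hq andbT adj_sym.
Qed.

Lemma heap_of_eq0 w : heap_of w = heap0 -> w = [::].
Proof.
case/lastP: w => // w l /(congr1 (htop^~ l.1)).
by rewrite htop_rcons /htop ffunE.
Qed.

Lemma heap_of_inj w1 w2 : heap_of w1 = heap_of w2 -> shuffle w1 w2.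
Proof.
move: {2}(size w1) (leqnn (size w1)) => k; elim: k w1 w2 => [|k IH] w1 w2.
  by rewrite leqn0 => /nilP -> /esym /heap_of_eq0 ->; apply: shuffle_refl.
case/lastP: w1 => [_ /esym /heap_of_eq0 ->|w1 l]; first exact: shuffle_refl.
rewrite size_rcons ltnS => hk e12.
have [w2' hw2] : exists w2', shuffle w2 (rcons w2' l).
  by case: l e12 => s e e12; apply: htop_shuffle_rcons; rewrite -e12 htop_rcons.
have /(congr1 (hpop l.1)) := e12.
rewrite heap_of_rcons hpop_push (hpop_shuffle_rcons hw2) => /(IH _ _ hk) h.
by apply: shuffle_trans (shuffle_sym hw2); rewrite -!cats1; apply: shuffle_catr.
Qed.

(** * Reduced words *)

(* No letter meets its inverse on top of the heap of the letters before it,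
   i.e. no letter can be shuffled next to an inverse letter and cancelled. *)
Fixpoint reduced_at (P : heap) (w : word) : bool :=
  if w is l :: r then (htop P l.1 != Some (~~ l.2)) && reduced_at (hpush l P) r
  else true.

Definition reduced (w : word) : bool := reduced_at heap0 w.

Lemma reduced_at_cat P w1 w2 :
  reduced_at P (w1 ++ w2) = reduced_at P w1 && reduced_at (hpushes P w1) w2.
Proof. by elim: w1 P => //= l w1 IH P; rewrite IH andbA. Qed.

Lemma reduced_at_shuffle w1 w2 :
  shuffle w1 w2 -> forall P, reduced_at P w1 = reduced_at P w2.
Proof.
elim=> [w|w1' w2' w3 _ h1 _ h2|p q a b hab] P; [by [] | by rewrite h1 h2 |].
rewrite !reduced_at_cat /=.
have hba : adj b.1 a.1 by rewrite adj_sym.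
rewrite (htop_push_adj _ hab) (htop_push_adj _ hba) (hpush_comm _ hab).
by congr (_ && _); rewrite !andbA; congr (_ && _); rewrite andbC.
Qed.

Lemma reduced_shuffle w1 w2 : shuffle w1 w2 -> reduced w1 = reduced w2.
Proof. by move=> h; apply: reduced_at_shuffle. Qed.

Lemma reduced_rcons w l :
  reduced (rcons w l) = reduced w && (htop (heap_of w) l.1 != Some (~~ l.2)).
Proof. by rewrite /reduced -cats1 reduced_at_cat /= andbT. Qed.

Lemma hact_pop l P : htop P l.1 = Some (~~ l.2) -> hact l P = hpop l.1 P.
Proof. by rewrite /hact => ->; rewrite eqxx. Qed.

Lemma hact_push l P : htop P l.1 != Some (~~ l.2) -> hact l P = hpush l P.
Proof. by rewrite /hact => /negbTE ->. Qed.

Lemma reduce_cat w0 u : reduced w0 -> exists w,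
  [/\ hacts (heap_of w0) u = heap_of w, reduced w, weq (w0 ++ u) w,
      w = w0 ++ u \/ size w < size w0 + size u &
      forall P : pred letter, all P (w0 ++ u) -> all P w].
Proof.
move=> r0; elim/last_ind: u => [|u l [w [hw rw ew sw aw]]].
  by exists w0; rewrite cats0; split => //; [apply: weq_refl | left].
rewrite hacts_rcons hw -rcons_cat.
case: (eqVneq (htop (heap_of w) l.1) (Some (~~ l.2))) => [top_l|top_l].
  have [w' sw'] := htop_shuffle_rcons top_l.
  exists w'; split.
  - by rewrite hact_pop // (hpop_shuffle_rcons sw').
  - by move: rw; rewrite (reduced_shuffle sw') reduced_rcons => /andP [].
  - rewrite -cats1; apply: weq_trans (weq_catr _ ew) _.
    apply: weq_trans (weq_catr _ (shuffle_weq sw')) _.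
    by rewrite -cats1 -catA; have := weq_catl w' (weq_cancel_letter l); rewrite cats0.
  - right; have sz := shuffle_size sw'; rewrite size_rcons in sz.
    rewrite size_rcons addnS ltnS; apply: ltnW; rewrite -sz.
    by case: sw => [->|/ltnW //]; rewrite size_cat.
  - move=> P; rewrite all_rcons => /andP [_ /aw].
    by rewrite (shuffle_all _ sw') all_rcons => /andP [].
exists (rcons w l); split.
- by rewrite hact_push // heap_of_rcons.
- by rewrite reduced_rcons rw.
- by rewrite -!cats1; apply: weq_catr.
- by rewrite size_rcons size_rcons addnS ltnS; case: sw => [->|]; [left | right].
- by move=> P; rewrite !all_rcons => /andP [-> /aw].
Qed.

Lemma hact_cancel w s e :
  reduced w -> hact (s, ~~ e) (hact (s, e) (heap_of w)) = heap_of w.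
Proof.
move=> rw; case: (eqVneq (htop (heap_of w) s) (Some (~~ e))) => [top_s|top_s].
  have [w' sw'] := htop_shuffle_rcons top_s.
  rewrite (hact_pop (l := (s, e))) // (heap_of_shuffle_rcons sw') (hpop_push (s, ~~ e)).
  rewrite hact_push // negbK.
  by move: rw; rewrite (reduced_shuffle sw') reduced_rcons negbK => /andP [].
rewrite (hact_push (l := (s, e))) // hact_pop /=; first exact: (hpop_push (s, e)).
by rewrite htop_push eqxx negbK.
Qed.

Lemma htop_act_adj l P t : adj l.1 t -> htop (hact l P) t = htop P t.
Proof.
move=> h; rewrite /hact; case: ifP => _; last exact: htop_push_adj.
by rewrite /htop ffunE eq_sym (negbTE (adj_neq h)) h.
Qed.

Lemma hpop_push_comm w a b : adj a.1 b.1 -> htop (heap_of w) a.1 = Some (~~ a.2) ->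
  hpop a.1 (hpush b (heap_of w)) = hpush b (hpop a.1 (heap_of w)).
Proof.
move=> hab /htop_shuffle_rcons [w' /heap_of_shuffle_rcons ->].
by rewrite -hpush_comm // !(hpop_push (a.1, ~~ a.2)).
Qed.

Lemma hact_comm w a b : adj a.1 b.1 ->
  hact a (hact b (heap_of w)) = hact b (hact a (heap_of w)).
Proof.
move=> hab; have hba : adj b.1 a.1 by rewrite adj_sym.
rewrite /hact (htop_act_adj _ hba) (htop_act_adj _ hab).
case: eqP => ha; case: eqP => hb.
- exact: hpop_comm.
- by rewrite (hpop_push_comm hab ha).
- by rewrite (hpop_push_comm hba hb).
- exact: hpush_comm.
Qed.

Lemma hacts_weq u1 u2 : weq u1 u2 ->
  forall w, reduced w -> hacts (heap_of w) u1 = hacts (heap_of w) u2.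
Proof.
elim=> {u1 u2} [u|u1 u2 _ IH|u1 u2 u3 _ IH1 _ IH2|p q u1 u2 _ IH|s e|a b e f hab] w rw.
- by [].
- by rewrite IH.
- by rewrite IH1 // IH2.
- by have [w' [e rw' _ _ _]] := reduce_cat p rw; rewrite !hacts_cat e IH.
- exact: hact_cancel.
- by have := hact_comm w (a := (b, f)) (b := (a, e)); rewrite /= adj_sym => ->.
Qed.

Lemma rheap_reduced w : reduced w -> rheap w = heap_of w.
Proof.
elim/last_ind: w => // w l IH; rewrite reduced_rcons => /andP [rw top_l].
by rewrite /rheap hacts_rcons -/(rheap w) IH // hact_push // heap_of_rcons.
Qed.

Lemma rheapP u1 u2 : weq u1 u2 <-> rheap u1 = rheap u2.
Proof.
split=> [h|]; first exact: (hacts_weq h (isT : reduced [::])).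
have [w1 [e1 _ q1 _ _]] := reduce_cat u1 (isT : reduced [::]).
have [w2 [e2 _ q2 _ _]] := reduce_cat u2 (isT : reduced [::]).
rewrite /rheap -/(heap_of [::]) e1 e2 => /heap_of_inj /shuffle_weq h.
exact: weq_trans q1 (weq_trans h (weq_sym q2)).
Qed.

Definition geodesic (u : word) : Prop := forall w, weq u w -> size u <= size w.

Lemma geodesic_wlen w : size w = wlen adj w -> geodesic w.
Proof. by move=> hw w' ew'; rewrite hw; apply: nmin_le; exists w'. Qed.

Lemma geodesic_reduced u : geodesic u -> reduced u.
Proof.
move=> gu; have [w [_ rw eu su _]] := reduce_cat u (isT : reduced [::]).
case: su => [ew|]; first by move: rw; rewrite ew.
by rewrite ltnNge (gu _ eu).
Qed.

Lemma geodesic_suffix p u : geodesic (p ++ u) -> geodesic u.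
Proof. by move=> gu w hw; have := gu _ (weq_catl p hw); rewrite !size_cat leq_add2l. Qed.

Definition splits (T S : pred 'I_n) (w : word) : Prop := exists w1 w2,
  [/\ shuffle w (w1 ++ w2), all (fun l => T l.1) w1 & all (fun l => S l.1) w2].

Lemma hacts_splits (T S : pred 'I_n) h : all (fun l => S l.1) h ->
  forall g h', all (fun l => T l.1) g -> all (fun l => S l.1) h' ->
  exists g' h'', [/\ hacts (heap_of (g ++ h')) h = heap_of (g' ++ h''),
                     all (fun l => T l.1) g' & all (fun l => S l.1) h''].
Proof.
elim: h => [_ g h' tg sh|l h IH /= /andP [sl sh0] g h' tg sh]; first by exists g, h'.
suff [g2 [h2 [-> tg2 sh2]]] : exists g2 h2,
    [/\ hact l (heap_of (g ++ h')) = heap_of (g2 ++ h2),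
        all (fun l => T l.1) g2 & all (fun l => S l.1) h2] by exact: IH.
case: (eqVneq (htop (heap_of (g ++ h')) l.1) (Some (~~ l.2))) => [top_l|top_l];
  last first.
  exists g, (rcons h' l); rewrite hact_push // -rcons_cat heap_of_rcons.
  by rewrite all_rcons sl sh.
rewrite hact_pop //; case: (htop_cat_shuffle_rcons top_l) => [[q sq]|[p [sp ap]]].
  exists g, q; split => //.
    by have := shuffle_catl g sq; rewrite -rcons_cat => /hpop_shuffle_rcons.
  by move: sh; rewrite (shuffle_all _ sq) all_rcons => /andP [].
exists p, h'; split => //; first exact: hpop_shuffle_rcons (shuffle_rcons_cat sp ap).
by move: tg; rewrite (shuffle_all _ sp) all_rcons => /andP [].
Qed.

Lemma splitsP (T S : pred 'I_n) w : reduced w ->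
  (exists g h, [/\ in_sub adj T g, in_sub adj S h & weq w (g ++ h)]) <-> splits T S w.
Proof.
move=> rw; split; last first.
  case=> w1 [w2 [sw t1 s2]]; exists w1, w2; split; last exact: shuffle_weq.
    by exists w1; split => //; apply: weq_refl.
  by exists w2; split => //; apply: weq_refl.
case=> g [h [[g0 [eg tg]] [h0 [eh sh]] ew]].
have [g1 [e1 _ _ _ tg1]] := reduce_cat g0 (isT : reduced [::]).
have [g' [h' [e' tg' sh']]] := hacts_splits sh (tg1 _ tg) (isT : all _ [::]).
exists g', h'; split => //; apply: heap_of_inj.
have /rheapP : weq w (g0 ++ h0) := weq_trans ew (weq_cat eg eh).
rewrite rheap_reduced // => ->.
by rewrite /rheap hacts_cat -/(heap_of [::]) e1 -e' cats0.
Qed.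

Lemma inZZ_splits v u w :
  reduced w -> inZZ adj v u w <-> splits (star adj v) (star adj u) w.
Proof.
move=> rw; rewrite -splitsP //.
by split=> [[g [h [? []]]]|[g [h []]]]; exists g, h.
Qed.

Lemma inZ_all u w : reduced w -> inZ adj u w <-> all (fun l => star adj u l.1) w.
Proof.
move=> rw; split=> [zw|aw]; last by exists w; split => //; apply: weq_refl.
have [|w1 [w2 [sw a1 a2]]] := proj1 (splitsP (star adj u) (star adj u) rw).
  exists w, [::]; split => //; first by exists [::]; split => //; apply: weq_refl.
  by rewrite cats0; apply: weq_refl.
by rewrite (shuffle_all _ sw) all_cat a1 a2.
Qed.

Lemma inZ_weq u w1 w2 : weq w1 w2 -> inZ adj u w1 <-> inZ adj u w2.
Proof.
by move=> e; split=> -[w [ew aw]]; exists w; split => //;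
  [apply: weq_trans (weq_sym e) ew | apply: weq_trans e ew].
Qed.

Lemma inZZ_weq v u w1 w2 : weq w1 w2 -> inZZ adj v u w1 <-> inZZ adj v u w2.
Proof.
by move=> e; split=> -[g [h [zg [zh ew]]]]; exists g, h; do !split => //;
  [apply: weq_trans (weq_sym e) ew | apply: weq_trans e ew].
Qed.

(** * Expansions *)

Inductive expansion : word -> word -> Prop :=
| expansion_nil : expansion [::] [::]
| expansion_cons l k w w' : expansion w w' -> expansion (l :: w) (nseq k.+1 l ++ w').

Lemma expansion_cat w1 w1' w2 w2' :
  expansion w1 w1' -> expansion w2 w2' -> expansion (w1 ++ w2) (w1' ++ w2').
Proof. by elim=> [//|l k u u' _ IH] e2; rewrite -catA; apply/expansion_cons/IH. Qed.

Lemma expansion_nseq l k : expansion [:: l] (nseq k.+1 l).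
Proof. by have := expansion_cons l k expansion_nil; rewrite cats0. Qed.

Lemma expansion_all (P : pred letter) w w' : expansion w w' -> all P w = all P w'.
Proof. by elim=> [//|l k u u' _ IH]; rewrite all_cat all_nseq /= IH. Qed.

Lemma expansion_winv w w' : expansion w w' -> expansion (winv w) (winv w').
Proof.
elim=> [|l k u u' _ IH]; first exact: expansion_nil.
by rewrite winv_cons winv_cat winv_nseq; apply: expansion_cat IH (expansion_nseq _ k).
Qed.

Lemma expansion_cons_inv l u u' : expansion (l :: u) u' ->
  exists k W, u' = nseq k.+1 l ++ W /\ expansion u W.
Proof. by move=> e; inversion e as [|l1 k W1 W hW]; exists k, W. Qed.

Lemma expansion_cat_inv p r w' : expansion (p ++ r) w' ->
  exists P R, [/\ w' = P ++ R, expansion p P & expansion r R].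
Proof.
elim: p w' => [|l p IH] w' /=.
  by exists [::], w'; split => //; apply: expansion_nil.
case/expansion_cons_inv=> k [W [-> /IH [P [R [-> eP eR]]]]].
by exists (nseq k.+1 l ++ P), R; rewrite catA; split => //; apply: expansion_cons.
Qed.

Lemma expansion_rcons_inv w l w' : expansion (rcons w l) w' ->
  exists W k, w' = W ++ nseq k.+1 l /\ expansion w W.
Proof.
rewrite -cats1 => /expansion_cat_inv [W [R [-> eW /expansion_cons_inv [k [L [-> eL]]]]]].
by exists W, k; inversion eL; rewrite cats0.
Qed.

Lemma htop_push_eq l P Q : htop P =1 htop Q -> htop (hpush l P) =1 htop (hpush l Q).
Proof. by move=> e t; rewrite !htop_push e. Qed.

Lemma htop_pushes_nseq k l P : htop (hpushes P (nseq k.+1 l)) =1 htop (hpush l P).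
Proof.
elim: k P => [//|k IH] P t; rewrite [nseq _ _]/= -/(hpushes (hpush l P) (nseq k.+1 l)) IH.
by rewrite !htop_push; case: eqP => //; case: adj.
Qed.

Lemma htop_pushes_expansion w w' : expansion w w' ->
  forall P Q, htop P =1 htop Q -> htop (hpushes P w) =1 htop (hpushes Q w').
Proof.
elim=> [//|l k u u' _ IH] P Q e /=; rewrite hpushes_cat; apply: IH => t.
by rewrite htop_pushes_nseq; apply: htop_push_eq.
Qed.

Lemma reduced_at_push_nseq k l P : reduced_at (hpush l P) (nseq k l).
Proof.
elim: k P => //= k IH P; rewrite IH htop_push eqxx andbT.
by case: (l.2).
Qed.

Lemma reduced_at_nseq k l P : reduced_at P (nseq k.+1 l) = (htop P l.1 != Some (~~ l.2)).
Proof. by rewrite /= reduced_at_push_nseq andbT. Qed.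

Lemma reduced_at_expansion w w' : expansion w w' ->
  forall P Q, htop P =1 htop Q -> reduced_at P w -> reduced_at Q w'.
Proof.
elim=> [//|l k u u' _ IH] P Q e /andP [top_l ru].
rewrite reduced_at_cat reduced_at_nseq -e top_l; apply: IH ru => t.
by rewrite htop_pushes_nseq; apply: htop_push_eq.
Qed.

Lemma expansion_reduced w w' : expansion w w' -> reduced w -> reduced w'.
Proof. by move=> e; apply: reduced_at_expansion. Qed.

Lemma expansion_shuffle w v : shuffle w v ->
  forall w', expansion w w' -> exists v', expansion v v' /\ shuffle w' v'.
Proof.
elim=> [u u' e|w1 w2 w3 _ IH1 _ IH2 w' e|p q a b hab w'].
- by exists u'; split => //; apply: shuffle_refl.
- have [v1 [e1 s1]] := IH1 _ e; have [v2 [e2 s2]] := IH2 _ e1.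
  by exists v2; split => //; apply: shuffle_trans s1 s2.
case/expansion_cat_inv=> P [R [-> eP]].
case/expansion_cons_inv=> ka [W [-> /expansion_cons_inv [kb [Q [-> eQ]]]]].
exists (P ++ nseq kb.+1 b ++ nseq ka.+1 a ++ Q); split.
  by apply: expansion_cat eP _; do 2!apply: expansion_cons.
apply: shuffle_catl; rewrite !catA; apply/shuffle_catr/shuffle_catC.
by apply/allP => _ /nseqP [-> _]; apply/allP => _ /nseqP [-> _].
Qed.

Lemma splits_rcons (T S : pred 'I_n) w w0 s e :
  shuffle w (rcons w0 (s, e)) -> S s -> splits T S w <-> splits T S w0.
Proof.
move=> sw ss; split=> -[w1 [w2 [s12 t1 s2]]]; last first.
  exists w1, (rcons w2 (s, e)); rewrite all_rcons ss; split => //.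
  by apply: shuffle_trans sw _; rewrite -rcons_cat -!cats1; apply: shuffle_catr.
have e12 : heap_of (rcons w0 (s, e)) = heap_of (w1 ++ w2).
  by rewrite -(heap_of_shuffle sw) (heap_of_shuffle s12).
have hw0 : heap_of w0 = hpop s (heap_of (w1 ++ w2)).
  by rewrite -e12 heap_of_rcons (hpop_push (s, e)).
have := htop_rcons w0 (s, e); rewrite e12.
case/htop_cat_shuffle_rcons=> [[q sq]|[p [sp ap]]].
  exists w1, q; split => //.
    apply/heap_of_inj; rewrite hw0.
    by have := shuffle_catl w1 sq; rewrite -rcons_cat => /hpop_shuffle_rcons.
  by move: s2; rewrite (shuffle_all _ sq) all_rcons => /andP [].
exists p, w2; split => //.
  by apply/heap_of_inj; rewrite hw0 (hpop_shuffle_rcons (shuffle_rcons_cat sp ap)).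
by move: t1; rewrite (shuffle_all _ sp) all_rcons => /andP [].
Qed.

Lemma splits_all (T S : pred 'I_n) w :
  (forall w0 l, shuffle w (rcons w0 l) -> ~~ S l.1) ->
  splits T S w <-> all (fun l => T l.1) w.
Proof.
move=> noS; split=> [[w1 [w2 [s12 t1 s2]]]|tw]; last first.
  by exists w, [::]; rewrite cats0; split => //; apply: shuffle_refl.
case/lastP: w2 s12 s2 => [|w2 l] s12 s2; first by rewrite (shuffle_all _ s12) cats0.
rewrite -rcons_cat in s12; move: s2 (noS _ _ s12).
by rewrite all_rcons => /andP [->].
Qed.

Lemma expansion_splits (T S : pred 'I_n) w w' :
  expansion w w' -> splits T S w <-> splits T S w'.
Proof.
move: {2}(size w') (leqnn (size w')) => N; elim: N w w' => [|N IH] w w' hN ew.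
  by move: hN ew; rewrite leqn0 => /nilP -> e; inversion e.
case: (pselect (exists w0 s e, shuffle w (rcons w0 (s, e)) /\ S s)).
  case=> w0 [s [e [sw ss]]].
  have [_ [/expansion_rcons_inv [W0 [k [-> eW0]]] sv]] := expansion_shuffle sw ew.
  have sz : size w' = (size W0 + k.+1)%N by rewrite (shuffle_size sv) size_cat size_nseq.
  have sv' : shuffle w' (rcons (W0 ++ nseq k (s, e)) (s, e)).
    by rewrite rcons_cat rcons_nseq.
  rewrite (splits_rcons T sw ss) (splits_rcons T sv' ss).
  case: k {sv sv'} sz => [|k] sz.
    by rewrite cats0; apply: IH eW0; move: hN; rewrite sz addn1 ltnS.
  have eW : expansion (rcons w0 (s, e)) (W0 ++ nseq k.+1 (s, e)).
    by rewrite -cats1; apply: expansion_cat eW0 (expansion_nseq _ k).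
  rewrite -(IH _ _ _ eW); last by move: hN; rewrite sz size_cat size_nseq addnS ltnS.
  exact: iff_sym (splits_rcons T (shuffle_refl _) ss).
move=> noS; have noSw : forall w0 l, shuffle w (rcons w0 l) -> ~~ S l.1.
  by move=> w0 [s e] sw; apply/negP => ss; apply: noS; exists w0, s, e.
have noSw' : forall w0 l, shuffle w' (rcons w0 l) -> ~~ S l.1.
  move=> w0 [s e] sw; apply/negP => ss; apply: noS.
  have := htop_rcons w0 (s, e); rewrite -(heap_of_shuffle sw).
  rewrite /= -(htop_pushes_expansion ew (fun _ => erefl)).
  by case/htop_shuffle_rcons => w1 sw1; exists w1, s, e.
by rewrite (splits_all _ noSw) (splits_all _ noSw') (expansion_all _ ew).
Qed.

Lemma expansion_inZ u w w' : reduced w -> expansion w w' ->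
  inZ adj u w <-> inZ adj u w'.
Proof.
move=> rw ew; rewrite (inZ_all u rw) (inZ_all u (expansion_reduced ew rw)).
by rewrite (expansion_all _ ew).
Qed.

Lemma expansion_inZZ v u w w' : reduced w -> expansion w w' ->
  inZZ adj v u w <-> inZZ adj v u w'.
Proof.
move=> rw ew; rewrite (inZZ_splits v u rw) (inZZ_splits v u (expansion_reduced ew rw)).
exact: expansion_splits.
Qed.

Lemma geodesic_no_cancel s e y b c q : geodesic ((s, e) :: y) ->
  shuffle y (b ++ c) -> ~ shuffle (winv b) (rcons q (s, e)).
Proof.
move=> gy sy /shuffle_winv; rewrite winvK -cats1 winv_cat /= => sb.
have : weq ((s, e) :: y) (winv q ++ c).
  apply: weq_trans (shuffle_weq (shuffle_catl [:: (s, e)] sy)) _.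
  apply: weq_trans (shuffle_weq (shuffle_catl [:: (s, e)] (shuffle_catr c sb))) _.
  exact: (weq_catr (winv q ++ c) (weq_free adj s e)).
move/gy; rewrite /= (shuffle_size sy) !size_cat (shuffle_size sb) /= size_winv.
by rewrite addSn ltnNge leqW.
Qed.

Lemma reduced_quotient_heap x : reduced x -> forall y, geodesic y -> exists a b c,
  [/\ shuffle x (a ++ c), shuffle y (b ++ c), reduced (a ++ winv b) &
      hacts (heap_of x) (winv y) = heap_of (a ++ winv b)].
Proof.
move=> rx; elim=> [_|[s e] y IH gy].
  by exists x, [::], [::]; rewrite !cats0; split => //; apply: shuffle_refl.
have [a [b [c [sx sy rab hab]]]] := IH (geodesic_suffix (p := [:: (s, e)]) gy).
rewrite winv_cons hacts_cat hab /=.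
case: (eqVneq (htop (heap_of (a ++ winv b)) s) (Some e)) => [top_s|top_s]; last first.
  exists a, ((s, e) :: b), c; rewrite winv_cons catA cats1.
  split => //; first exact: (shuffle_catl [:: _] sy).
    by rewrite reduced_rcons rab /= negbK.
  by rewrite hact_push /= ?negbK // heap_of_rcons.
rewrite hact_pop /= ?negbK //.
have [[q sq]|[a' [sa ab]]] := htop_cat_shuffle_rcons top_s.
  by case: (geodesic_no_cancel gy sy sq).
have sab := shuffle_rcons_cat sa ab.
exists a', b, ((s, e) :: c); split.
- by apply: shuffle_trans sx _; rewrite -cat_rcons; apply: shuffle_catr.
- apply: shuffle_trans (shuffle_catl [:: (s, e)] sy) _.
  have := @shuffle_rot1 (s, e) b; rewrite -(all_winv (adj s)) => /(_ ab).
  by move/(shuffle_catr c); rewrite -catA.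
- by move: rab; rewrite (reduced_shuffle sab) reduced_rcons => /andP [].
- exact: hpop_shuffle_rcons sab.
Qed.

Lemma reduced_quotient x y : reduced x -> geodesic y -> exists a b c,
  [/\ shuffle x (a ++ c), shuffle y (b ++ c), reduced (a ++ winv b) &
      weq (x ++ winv y) (a ++ winv b)].
Proof.
move=> rx gy; have [a [b [c [sx sy rab hab]]]] := reduced_quotient_heap rx gy.
exists a, b, c; split => //; apply/rheapP.
by rewrite (rheap_reduced rab) /rheap hacts_cat -/(rheap x) (rheap_reduced rx).
Qed.

(** * The map sigma *)

Lemma fval_weq l t1 t2 : weq t1 t2 -> fval adj l t1 = fval adj l t2.
Proof.
move=> e; congr nmin; apply: funext => m; apply: propext.
by split=> -[x [y [ex rest]]]; exists x, y; split => //;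
  [apply: weq_trans (weq_sym e) ex | apply: weq_trans e ex].
Qed.

Lemma fval_cons_adj c l t : adj c.1 l.1 -> fval adj l (c :: t) = fval adj l t.
Proof.
move=> hcl; have hlc : adj l.1 c.1 by rewrite adj_sym.
congr nmin; apply: funext => m; apply: propext.
split=> -[x [y [ex [[x0 [ex0 ax0]] hy]]]].
  exists ((c.1, ~~ c.2) :: x), y; split => //; last split => //.
    apply: weq_trans (weq_catl [:: (c.1, ~~ c.2)] ex).
    by apply: weq_sym; have := weq_catr t (weq_cancel_letter c).
  by exists ((c.1, ~~ c.2) :: x0); split; [apply: (weq_catl [:: _] ex0) | rewrite /= hlc].
exists (c :: x), y; split; first exact: (weq_catl [:: c] ex).
by split => //; exists (c :: x0); split; [apply: (weq_catl [:: c] ex0) | rewrite /= hlc].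
Qed.

Variable M : nat.
Local Notation sigma := (sigma adj M).

Fixpoint sigma_prefix (a c : word) : word :=
  if a is l :: r then wpow l.1 (Nexp M l.2 (fval adj l (l :: r ++ c))) ++ sigma_prefix r c
  else [::].

Lemma sigma_cat a c : sigma (a ++ c) = sigma_prefix a c ++ sigma c.
Proof. by elim: a => //= l a ->; rewrite catA. Qed.

Lemma expansion_sigma_prefix a c : expansion a (sigma_prefix a c).
Proof.
elim: a => [|l a IH] /=; first exact: expansion_nil.
by have [k ->] := wpow_Nexp l M (fval adj l (l :: a ++ c)); apply: expansion_cons.
Qed.

Lemma sigma_prefix_weq a c1 c2 : weq c1 c2 -> sigma_prefix a c1 = sigma_prefix a c2.
Proof.
by move=> e; elim: a => //= l a ->; rewrite (fval_weq _ (weq_catl (l :: a) e)).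
Qed.

Lemma sigma_swap a b q : adj a.1 b.1 -> weq (sigma (a :: b :: q)) (sigma (b :: a :: q)).
Proof.
move=> hab; have hba : adj b.1 a.1 by rewrite adj_sym.
have fa : fval adj a (a :: b :: q) = fval adj a (a :: q).
  by rewrite (fval_weq _ (shuffle_weq (shuffle_swap [::] q hab))) /= fval_cons_adj.
have fb : fval adj b (b :: a :: q) = fval adj b (b :: q).
  by rewrite (fval_weq _ (shuffle_weq (shuffle_swap [::] q hba))) /= fval_cons_adj.
rewrite /= fa fb !catA; apply/weq_catr/shuffle_weq/shuffle_catC.
by apply: wpow_all => e; apply: wpow_all => f.
Qed.

Lemma sigma_shuffle w1 w2 : shuffle w1 w2 -> weq (sigma w1) (sigma w2).
Proof.
elim=> [w|w1' w2' w3 _ h1 _ h2|p q a b hab]; first exact: weq_refl.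
  exact: weq_trans h1 h2.
rewrite !sigma_cat (sigma_prefix_weq p (shuffle_weq (shuffle_swap [::] q hab))).
exact/weq_catl/sigma_swap.
Qed.

Lemma weq_sigma_quotient x y a b c : shuffle x (a ++ c) -> shuffle y (b ++ c) ->
  weq (sigma x ++ winv (sigma y)) (sigma_prefix a c ++ winv (sigma_prefix b c)).
Proof.
move=> /sigma_shuffle sx /sigma_shuffle/weq_winv sy.
rewrite sigma_cat in sx; rewrite sigma_cat winv_cat in sy.
apply: weq_trans (weq_cat sx sy) _; rewrite -catA (catA (sigma c)).
by have := weq_ctx (sigma_prefix a c) (winv (sigma_prefix b c)) (weq_cat_winv (sigma c)).
Qed.

End RightAngledArtinGroup.

Theorem lemma3p5 (n : nat) (adj : rel 'I_n)
  (adj_sym : symmetric adj) (adj_irr : irreflexive adj)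
  (M : nat) (HM : 0 < M) (u v : 'I_n) (x y : word n) :
  (* x, y are geodesic words representing elements of B(M) *)
  size x = wlen adj x -> size y = wlen adj y ->
  size x <= M -> size y <= M ->
  (inZ adj u (x ++ winv y) <->
     inZ adj u (sigma adj M x ++ winv (sigma adj M y))) /\
  (inZZ adj v u (x ++ winv y) <->
     inZZ adj v u (sigma adj M x ++ winv (sigma adj M y))).
Proof.
move=> /geodesic_wlen gx /geodesic_wlen gy _ _.
have rx := geodesic_reduced adj_sym adj_irr gx.
have [a [b [c [sx sy rab exy]]]] := reduced_quotient adj_sym adj_irr rx gy.
have esig := weq_sigma_quotient adj_sym M sx sy.
have eab := expansion_cat (expansion_sigma_prefix adj M a c)
                          (expansion_winv (expansion_sigma_prefix adj M b c)).
rewrite (inZ_weq u exy) (inZ_weq u esig) (inZZ_weq v u exy) (inZZ_weq v u esig).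
by split; [apply: expansion_inZ | apply: expansion_inZZ].
Qed.
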